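(* Let $R$ be a profile of lexicographic preferences and $P=\mathrm{MPS}(R)$. For every type $i$, the type-$i$ marginal assignment $P^i$, defined by $P^i_{j,o}=\sum_{x\in\mathcal D:\,x_i=o}p_{j,x}$ for $j\in N$, $o\in D_i$, equals the output of the single-type probabilistic serial mechanism $\mathrm{PS}$ applied to the items $D_i$ and the profile $R^i=(\rhd^i_j)_{j\le n}$.
   Context: Setting: $N=\{1,\dots,n\}$ agents; $M=D_1\cup\dots\cup D_p$ items with pairwise disjoint types, $|D_i|=n$, unit supply; bundles $\mathcal D=D_1\times\dots\times D_p$, $x_i$ the type-$i$ component. Lexicographic preference: importance order $\rhd_j$ over types and strict orders $\rhd^i_j$ on each $D_i$; $x\succ_j y$ iff there is a type $i$ with $x_i\rhd^i_j y_i$ and $x_{i'}=y_{i'}$ for all $i'\rhd_j i$. MPS: items start with supply $1$; a bundle is available if all its items have positive remaining supply. Continuously in time each agent eats her $\succ_j$-most-preferred available bundle at rate $1$ (each item of it consumed at rate $1$, $p_{j,x}$ growing at rate $1$); exhausted items make all bundles containing them unavailable; run until all items are exhausted. Single-type PS on a set $D$ of $n$ items with strict orders $\rhd_j$ on $D$: items start with supply $1$; continuously in time each agent eats at rate $1$ her $\rhd_j$-most-preferred item with positive remaining supply, until time $1$; the output matrix records how much of each item each agent ate. *)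

From mathcomp Require Import all_boot all_order all_algebra all_fingroup.
Set Implicit Arguments. Unset Strict Implicit. Unset Printing Implicit Defensive.
Import Order.TTheory GRing.Theory Num.Theory.
Local Open Scope ring_scope.

(* Generic simultaneous eating process (phase-by-phase description of the   *)
(* continuous-time process).  Agents are 'I_n; I is the finite set of items *)
(* (each with initial supply 1); O is the set of objects agents eat (items  *)
(* for PS, bundles for MPS); [contents x] is the set of items contained in  *)
(* object x; [better j x y] means agent j strictly prefers x to y.          *)
(* In each phase every agent eats her most preferred available object at    *)
(* rate 1 (each item of it at rate 1); the phase lasts until the first item *)
(* being eaten is exhausted (or, if a horizon T is given, until time T).    *)
(* Every productive phase exhausts an item, so #|I|.+1 phases reach the end *)
(* of the process (further phases have duration 0).                         *)
Section Eating.
Variables (R : realFieldType) (n : nat) (I O : finType)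
  (contents : O -> pred I) (better : 'I_n -> rel O) (horizon : option R).

Record state := State {
  supply : {ffun I -> R};
  alloc : {ffun 'I_n -> {ffun O -> R}};
  clock : R }.

Definition available (st : state) (x : O) : bool :=
  [forall o, contents x o ==> (0 < supply st o)].

Definition top_obj (st : state) (j : 'I_n) : option O :=
  [pick x | available st x && [forall y, available st y ==> ~~ better j y x]].

Definition eats (st : state) (j : 'I_n) (o : I) : bool :=
  if top_obj st j is Some x then contents x o else false.

Definition rate (st : state) (o : I) : R := (#|[pred j | eats st j o]|)%:R.

Definition ratios (st : state) : seq R :=
  [seq supply st o / rate st o | o <- enum I & 0 < rate st o].

Definition dmin (st : state) : R :=
  if ratios st is r :: rs then foldr Order.min r rs else 0.

Definition dur (st : state) : R :=
  if horizon is Some T then Order.min (dmin st) (T - clock st) else dmin st.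

Definition step (st : state) : state :=
  State [ffun o => supply st o - dur st * rate st o]
        [ffun j => [ffun x => alloc st j x +
                     (if top_obj st j == Some x then dur st else 0)]]
        (clock st + dur st).

Definition init_state : state := State [ffun=> 1] [ffun=> [ffun=> 0]] 0.

Definition eating_outcome : {ffun 'I_n -> {ffun O -> R}} :=
  alloc (iter #|I|.+1 step init_state).

End Eating.

(* Preferences.  A strict order on a finite set 'I_k is encoded by a rank   *)
(* permutation r : {perm 'I_k}: a is preferred to b iff r a < r b.          *)
(* Types are 'I_p, D_i is identified with 'I_n, bundles are                 *)
(* {ffun 'I_p -> 'I_n} (x i = type-i component).                            *)
(*   imp j      : importance order of agent j over types                    *)
(*   ord j i    : agent j's order on D_i                                    *)

Definition bundle (p n : nat) := {ffun 'I_p -> 'I_n}.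

Definition lex_better (n p : nat) (imp : 'I_n -> {perm 'I_p})
  (ord : 'I_n -> 'I_p -> {perm 'I_n}) (j : 'I_n) (x y : bundle p n) : bool :=
  [exists i, (ord j i (x i) < ord j i (y i))%N &&
     [forall i', ((imp j i' < imp j i)%N) ==> (x i' == y i')]].

(* item (i, o) is item o of type i *)
Definition bundle_contents (p n : nat) (x : bundle p n) : pred ('I_p * 'I_n) :=
  fun io => x io.1 == io.2.

Definition MPS (R : realFieldType) (n p : nat) (imp : 'I_n -> {perm 'I_p})
  (ord : 'I_n -> 'I_p -> {perm 'I_n}) : {ffun 'I_n -> {ffun bundle p n -> R}} :=
  @eating_outcome R n ('I_p * 'I_n)%type (bundle p n)
    (@bundle_contents p n) (lex_better imp ord) None.

Definition PS (R : realFieldType) (n : nat) (ordD : 'I_n -> {perm 'I_n})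
  : {ffun 'I_n -> {ffun 'I_n -> R}} :=
  @eating_outcome R n 'I_n 'I_n (fun o => pred1 o)
    (fun j a b => (ordD j a < ordD j b)%N) (Some 1).

Definition marginal (R : realFieldType) (n p : nat)
  (P : {ffun 'I_n -> {ffun bundle p n -> R}}) (i : 'I_p) (j : 'I_n) (o : 'I_n) : R :=
  \sum_(x : bundle p n | x i == o) P j x.

From mathcomp Require Import all_boot all_order all_algebra all_fingroup.
From mathcomp Require Import ring lra.
Set Implicit Arguments. Unset Strict Implicit. Unset Printing Implicit Defensive.
Import Order.TTheory GRing.Theory Num.Theory.
Local Open Scope ring_scope.

(* Both mechanisms are runs of the phase-by-phase eating process, and
   the proof compares the two runs phase by phase.
   1. The eating process.  Let [advance st d] run the current phase only for
      time d.  If d is shorter than the phase, nothing gets exhausted, so the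
      next step simply finishes the phase ([step_advance_early]); and after
      more steps than live items the process has stopped ([dur_iter_eq0]).
      Hence interrupting a phase does not change the terminal state
      ([iter_step_advance]).
   2. Projection.  Read an MPS state as a PS state on D_i ([proj]).  Along the
      MPS run every type has total remaining supply n (1 - clock) ([balanced]),
      so either every type still has an item in stock or all is eaten.  Then
      an agent's best available item of type i is the i-th component of her
      lexicographically best available bundle ([top_proj]), and one MPS phase
      projects onto a PS phase interrupted at the MPS phase length, which is at
      most the PS one ([proj_step], [durM_le_durP]).
   3. By 1 and 2, PS run from the projection of any state of the MPS run yields
      the PS outcome ([PS_from_run]); the projection of the terminal MPS state
      is already terminal for PS ([proj_terminal]), which is the theorem. *)

Section ListMin.
Variable R : realDomainType.

Lemma foldr_min_le (r : R) rs x : x \in r :: rs -> foldr Order.min r rs <= x.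
Proof.
elim: rs => [|a rs IH] /=; first by rewrite mem_seq1 => /eqP ->.
rewrite !inE ge_min => /or3P[xa|/eqP->|x_rs].
- by rewrite IH ?orbT // inE xa.
- by rewrite lexx.
- by rewrite IH ?orbT // inE x_rs orbT.
Qed.

Lemma foldr_min_mem (r : R) rs : foldr Order.min r rs \in r :: rs.
Proof.
elim: rs => [|a rs IH] /=; first by rewrite mem_head.
rewrite minElt; case: ifP => _; first by rewrite !inE eqxx orbT.
by move: IH; rewrite !inE => /orP[->|->]; rewrite ?orbT.
Qed.

Lemma min_subr (a b d : R) : Order.min (a - d) (b - d) = Order.min a b - d.
Proof. by rewrite !minElt ltrD2r; case: ifP. Qed.

Lemma foldr_min_subr (r d : R) rs :
  foldr Order.min (r - d) [seq x - d | x <- rs] = foldr Order.min r rs - d.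
Proof. by elim: rs => [|a rs IH] //=; rewrite IH min_subr. Qed.

End ListMin.

Lemma iter_fixed (T : Type) (f : T -> T) x k : f x = x -> iter k f x = x.
Proof. by move=> fx; elim: k => //= k ->. Qed.

Section EatingProcess.
Variables (R : realFieldType) (n : nat) (I O : finType)
  (contents : O -> pred I) (better : 'I_n -> rel O) (horizon : option R).

Local Notation stateT := (state R n I O).
Local Notation availG := (@available R n I O contents).
Local Notation topG := (@top_obj R n I O contents better).
Local Notation eatsG := (@eats R n I O contents better).
Local Notation rateG := (@rate R n I O contents better).
Local Notation ratiosG := (@ratios R n I O contents better).
Local Notation dminG := (@dmin R n I O contents better).
Local Notation durG := (@dur R n I O contents better horizon).
Local Notation stepG := (@step R n I O contents better horizon).

Lemma state_ext (s1 s2 : stateT) : supply s1 = supply s2 -> alloc s1 = alloc s2 ->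
  clock s1 = clock s2 -> s1 = s2.
Proof. by case: s1 => ???; case: s2 => ??? /= -> -> ->. Qed.

Definition advance (st : stateT) (d : R) : stateT :=
  State [ffun o => supply st o - d * rateG st o]
        [ffun j => [ffun x => alloc st j x + (if topG st j == Some x then d else 0)]]
        (clock st + d).

Lemma step_advance st : stepG st = advance st (durG st).
Proof. by []. Qed.

Lemma supply_advance st d o : supply (advance st d) o = supply st o - d * rateG st o.
Proof. by rewrite ffunE. Qed.

Lemma alloc_advance st d j x : alloc (advance st d) j x =
  alloc st j x + (if topG st j == Some x then d else 0).
Proof. by rewrite /= !ffunE. Qed.

Lemma clock_advance st d : clock (advance st d) = clock st + d.
Proof. by []. Qed.

Lemma advance0 st : advance st 0 = st.
Proof.
apply: state_ext => /=; last by rewrite addr0.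
- by apply/ffunP=> o; rewrite ffunE mul0r subr0.
- by apply/ffunP=> j; apply/ffunP=> x; rewrite !ffunE; case: ifP; rewrite addr0.
Qed.

Lemma eats_supply_gt0 st j o : eatsG st j o -> 0 < supply st o.
Proof.
rewrite /eats /top_obj; case: pickP => // x /andP[avx _] xo.
by move/forallP: avx => /(_ o); rewrite xo.
Qed.

Lemma rate_ge0 st o : 0 <= rateG st o.
Proof. exact: ler0n. Qed.

Lemma rate_gt0P st o : reflect (exists j, eatsG st j o) (0 < rateG st o).
Proof.
rewrite /rate ltr0n; apply: (iffP card_gt0P) => -[j jo]; exists j;
  by rewrite ?inE in jo *.
Qed.

Lemma rate_gt0_supply st o : 0 < rateG st o -> 0 < supply st o.
Proof. by case/rate_gt0P => j /eats_supply_gt0. Qed.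

Lemma rate_eq0 st o : ~~ (0 < rateG st o) -> rateG st o = 0.
Proof. by move=> H; apply/eqP; rewrite eq_le rate_ge0 andbT leNgt. Qed.

(* [ratiosG st] lists the exhaustion times of the items eaten in the current
   phase, and [dminG st] is the least of them (0 if nothing is eaten). *)
Lemma ratio_mem st o : 0 < rateG st o -> supply st o / rateG st o \in ratiosG st.
Proof. by move=> H; apply: map_f; rewrite mem_filter H mem_enum. Qed.

Lemma mem_ratios st x : x \in ratiosG st ->
  exists2 o, 0 < rateG st o & x = supply st o / rateG st o.
Proof. by case/mapP => o; rewrite mem_filter => /andP[H _] ->; exists o. Qed.

Lemma dmin_le st x : x \in ratiosG st -> dminG st <= x.
Proof. rewrite /dmin; case: (ratiosG st) => [//|r rs]; exact: foldr_min_le. Qed.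

Lemma dmin_mem st : ratiosG st != [::] -> dminG st \in ratiosG st.
Proof. rewrite /dmin; case: (ratiosG st) => [//|r rs] _; exact: foldr_min_mem. Qed.

Lemma dmin_nil st : ratiosG st = [::] -> dminG st = 0.
Proof. by rewrite /dmin => ->. Qed.

Lemma dmin_ge0 st : (forall o, 0 <= supply st o) -> 0 <= dminG st.
Proof.
move=> supply_ge0; case E: (ratiosG st) => [|r rs]; first by rewrite dmin_nil.
have /mem_ratios[o ro ->] : dminG st \in ratiosG st by apply: dmin_mem; rewrite E.
by rewrite divr_ge0 // ltW.
Qed.

Lemma eats_ratios st j o : eatsG st j o -> ratiosG st != [::].
Proof.
move=> jo; have ro : 0 < rateG st o by apply/rate_gt0P; exists j.
by apply: contraTneq (ratio_mem ro) => ->.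
Qed.

Lemma eats_dmin_gt0 st j o : eatsG st j o -> 0 < dminG st.
Proof.
by case/eats_ratios/dmin_mem/mem_ratios => o' ro' ->; rewrite divr_gt0 // rate_gt0_supply.
Qed.

Lemma dmin_no_top st : (forall j, topG st j = None) -> dminG st = 0.
Proof.
move=> notop; case E: (ratiosG st) => [|r rs]; first exact: dmin_nil.
have /mem_ratios[o /rate_gt0P[j]] : r \in ratiosG st by rewrite E mem_head.
by rewrite /eats notop.
Qed.

Lemma dur_le_dmin st : durG st <= dminG st.
Proof. by rewrite /dur; case: horizon => [T|] //; rewrite ge_min lexx. Qed.

Lemma dur_cases st : durG st = dminG st \/
  exists2 T, horizon = Some T & durG st = T - clock st.
Proof.
rewrite /dur; case: horizon => [T|]; last by left.
by rewrite minElt; case: ifP => _; [left | right; exists T].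
Qed.

Lemma step_fixed st : durG st = 0 -> stepG st = st.
Proof. by rewrite step_advance => ->; exact: advance0. Qed.

Definition feasible (st : stateT) : Prop := (forall o, 0 <= supply st o) /\
  (if horizon is Some T then clock st <= T else True).

Definition live (st : stateT) : nat := #|[pred o | 0 < supply st o]|.

Lemma dur_ge0 st : feasible st -> 0 <= durG st.
Proof.
case=> supply_ge0; rewrite /dur; case: horizon => [T|] clockT; last exact: dmin_ge0.
by rewrite le_min dmin_ge0 // subr_ge0.
Qed.

Lemma feasible_advance st d : feasible st -> 0 <= d -> d <= durG st ->
  feasible (advance st d).
Proof.
move=> [supply_ge0 clockT] d_ge0 d_le; split.
- move=> o; rewrite supply_advance.
  have [ro|ro] := boolP (0 < rateG st o); last by rewrite rate_eq0 // mulr0 subr0.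
  have : d <= supply st o / rateG st o.
    exact: le_trans d_le (le_trans (dur_le_dmin st) (dmin_le (ratio_mem ro))).
  by rewrite ler_pdivlMr // => ?; lra.
- move: d_le; rewrite clock_advance /dur; case: horizon clockT => [T|] // clockT.
  by rewrite le_min => /andP[_ ?]; lra.
Qed.

Lemma feasible_step st : feasible st -> feasible (stepG st).
Proof. by move=> fst; apply: feasible_advance (dur_ge0 fst) _. Qed.

Lemma supply_advance_le st d o : 0 <= d -> supply (advance st d) o <= supply st o.
Proof. by move=> d_ge0; rewrite supply_advance gerBl mulr_ge0 ?rate_ge0. Qed.

Lemma live_advance st d : 0 <= d -> (live (advance st d) <= live st)%N.
Proof.
move=> d_ge0; apply/subset_leq_card/subsetP => o; rewrite !inE => H.
exact: lt_le_trans H (supply_advance_le _ _ d_ge0).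
Qed.

(* Each phase of positive length either exhausts an item or reaches the
   horizon, after which all phases have length 0. *)
Lemma step_progress st : feasible st -> 0 < durG st ->
  (live (stepG st) < live st)%N \/ durG (stepG st) = 0.
Proof.
move=> fst d_gt0; case: (dur_cases st) => [d_min | [T hT dT]].
- left; have : ratiosG st != [::].
    by apply/eqP => /dmin_nil d0; move: d_gt0; rewrite d_min d0 ltxx.
  case/dmin_mem/mem_ratios => o ro def_d; rewrite step_advance.
  apply/proper_card/properP; split.
    apply/subsetP => x; rewrite !inE => H.
    exact: lt_le_trans H (supply_advance_le _ _ (ltW d_gt0)).
  exists o; first by rewrite inE rate_gt0_supply.
  by rewrite inE supply_advance d_min def_d mulfVK ?subrr ?ltxx // gt_eqF.
- right; have [supply_ge0 _] := feasible_step fst; move: supply_ge0.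
  rewrite step_advance dT /dur hT clock_advance => supply_ge0.
  have -> : T - (clock st + (T - clock st)) = 0 by ring.
  by apply/eqP; rewrite eq_le ge_min lexx orbT le_min lexx dmin_ge0.
Qed.

Lemma dur_iter_eq0 K st : feasible st -> (live st < K)%N ->
  durG (iter K stepG st) = 0.
Proof.
elim: K st => [//|K IH] st fst liveK; rewrite iterSr.
have [d0|dn0] := eqVneq (durG st) 0; first by rewrite step_fixed // iter_fixed // step_fixed.
have d_gt0 : 0 < durG st by rewrite lt_def dn0 dur_ge0.
case: (step_progress fst d_gt0) => [lt_live|d0].
  by apply: IH; [exact: feasible_step | exact: leq_trans lt_live liveK].
by rewrite iter_fixed // step_fixed.
Qed.

Lemma iter_step_stable K st : feasible st -> (live st < K)%N ->
  iter K.+1 stepG st = iter K stepG st.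
Proof. by move=> fst liveK; rewrite iterS step_fixed // dur_iter_eq0. Qed.

(* Interrupting a phase early: nothing is exhausted yet, so the agents keep
   eating the same objects and the remaining phase is shorter by d. *)
Section EarlyStop.
Variables (st : stateT) (d : R).
Hypotheses (d_ge0 : 0 <= d) (early : d < dminG st).

Lemma supply_early_gt0 o : (0 < supply (advance st d) o) = (0 < supply st o).
Proof.
rewrite supply_advance.
have [ro|ro] := boolP (0 < rateG st o); last by rewrite rate_eq0 // mulr0 subr0.
have : d < supply st o / rateG st o := lt_le_trans early (dmin_le (ratio_mem ro)).
by rewrite ltr_pdivlMr // rate_gt0_supply // => ?; apply/idP; lra.
Qed.

Lemma top_early j : topG (advance st d) j = topG st j.
Proof.
have avail_early x : availG (advance st d) x = availG st x.
  by apply: eq_forallb => o; rewrite supply_early_gt0.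
rewrite /top_obj; apply: eq_pick => x /=; rewrite avail_early; congr andb.
by apply: eq_forallb => y; rewrite avail_early.
Qed.

Lemma rate_early o : rateG (advance st d) o = rateG st o.
Proof. by rewrite /rate; congr (_%:R); apply: eq_card => j; rewrite !inE /eats top_early. Qed.

Lemma ratios_early : ratiosG (advance st d) = [seq x - d | x <- ratiosG st].
Proof.
rewrite /ratios (eq_filter (a2 := fun o => 0 < rateG st o)); last first.
  by move=> o; rewrite rate_early.
rewrite -map_comp; apply/eq_in_map => o; rewrite mem_filter => /andP[ro _] /=.
by rewrite rate_early supply_advance; field; rewrite gt_eqF.
Qed.

Lemma dur_early : durG (advance st d) = durG st - d.
Proof.
have dmin_shift : dminG (advance st d) = dminG st - d.
  rewrite /dmin ratios_early; case E: (ratiosG st) => [|r rs] /=.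
    by move: early; rewrite dmin_nil // => /(le_lt_trans d_ge0); rewrite ltxx.
  exact: foldr_min_subr.
rewrite /dur dmin_shift; case: horizon => [T|] //.
by rewrite clock_advance -min_subr; congr Order.min; ring.
Qed.

End EarlyStop.

Lemma step_advance_early st d : 0 <= d -> d < durG st ->
  stepG (advance st d) = stepG st.
Proof.
move=> d_ge0 d_lt; have early := lt_le_trans d_lt (dur_le_dmin st).
rewrite !step_advance dur_early //; apply: state_ext => /=.
- by apply/ffunP => o; rewrite !ffunE rate_early //; ring.
- apply/ffunP => j; apply/ffunP => x; rewrite !ffunE top_early //.
  by case: (topG st j == Some x); ring.
- by ring.
Qed.

Lemma iter_step_advance K st d : feasible st -> (live st < K)%N ->
  0 <= d -> d <= durG st -> iter K stepG (advance st d) = iter K stepG st.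
Proof.
move=> fst liveK d_ge0; rewrite le_eqVlt => /orP[/eqP ->|d_lt].
  by rewrite -step_advance -iterSr iter_step_stable.
have fadv : feasible (advance st d) := feasible_advance fst d_ge0 (ltW d_lt).
rewrite -(iter_step_stable fadv); last exact: leq_ltn_trans (live_advance _ d_ge0) liveK.
by rewrite iterSr step_advance_early // -iterSr iter_step_stable.
Qed.

End EatingProcess.

(* The MPS run seen through one type i; the agent j0 only witnesses n > 0. *)
Section Projection.
Variables (R : realFieldType) (n p : nat) (imp : 'I_n -> {perm 'I_p})
  (ord : 'I_n -> 'I_p -> {perm 'I_n}) (i : 'I_p) (j0 : 'I_n).

(* Suffix M: the MPS instance of the process; suffix P: PS on D_i = 'I_n. *)
Local Notation B := (bundle p n).
Local Notation cM := (@bundle_contents p n).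
Local Notation bM := (lex_better imp ord).
Local Notation SM := (state R n ('I_p * 'I_n)%type B).
Local Notation availM := (@available R n _ _ cM).
Local Notation topM := (@top_obj R n _ _ cM bM).
Local Notation eatsM := (@eats R n _ _ cM bM).
Local Notation rateM := (@rate R n _ _ cM bM).
Local Notation ratiosM := (@ratios R n _ _ cM bM).
Local Notation dminM := (@dmin R n _ _ cM bM).
Local Notation durM := (@dur R n _ _ cM bM None).
Local Notation stepM := (@step R n _ _ cM bM None).
Local Notation initM := (init_state R n ('I_p * 'I_n)%type B).

Local Notation cP := (fun o : 'I_n => pred1 o).
Local Notation bP := (fun (j : 'I_n) (a b : 'I_n) => (ord j i a < ord j i b)%N).
Local Notation SP := (state R n 'I_n 'I_n).
Local Notation availP := (@available R n _ _ cP).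
Local Notation eatsP := (@eats R n _ _ cP bP).
Local Notation topP := (@top_obj R n _ _ cP bP).
Local Notation rateP := (@rate R n _ _ cP bP).
Local Notation ratiosP := (@ratios R n _ _ cP bP).
Local Notation dminP := (@dmin R n _ _ cP bP).
Local Notation durP := (@dur R n _ _ cP bP (Some 1)).
Local Notation stepP := (@step R n _ _ cP bP (Some 1)).
Local Notation advanceP := (@advance R n _ _ cP bP).
Local Notation initP := (init_state R n 'I_n 'I_n).

Definition proj (st : SM) : SP :=
  State [ffun o => supply st (i, o)]
        [ffun j => [ffun o => \sum_(x : B | x i == o) alloc st j x]] (clock st).

Lemma supply_proj st o : supply (proj st) o = supply st (i, o).
Proof. by rewrite ffunE. Qed.

Lemma alloc_proj st j o : alloc (proj st) j o = \sum_(x : B | x i == o) alloc st j x.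
Proof. by rewrite /= !ffunE. Qed.

Lemma proj_init : proj initM = initP.
Proof.
apply: state_ext => //.
- by apply/ffunP => o; rewrite supply_proj !ffunE.
- apply/ffunP => j; apply/ffunP => o; rewrite alloc_proj !ffunE.
  by apply: big1 => x _; rewrite !ffunE.
Qed.

(* Invariant of the MPS run: supplies are nonnegative and every type has the
   same total remaining supply n (1 - clock), since each agent eats exactly one
   item of every type at any time. *)
Definition balanced (st : SM) : Prop := (forall io, 0 <= supply st io) /\
  (forall i', \sum_(o : 'I_n) supply st (i', o) = n%:R * (1 - clock st)).

Definition all_types_live (st : SM) : bool :=
  [forall i', [exists o, 0 < supply st (i', o)]].

Lemma availM_E st x : availM st x = [forall i', 0 < supply st (i', x i')].
Proof.
apply/forallP/forallP => H.
- by move=> i'; have := H (i', x i'); rewrite /bundle_contents /= eqxx.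
- case=> a b; apply/implyP; rewrite /bundle_contents /= => /eqP <-; exact: H.
Qed.

Lemma availP_E st o : availP (proj st) o = (0 < supply st (i, o)).
Proof.
apply/forallP/idP => [H|H o'].
- by have := H o; rewrite /= eqxx /= ffunE.
- by apply/implyP => /= /eqP ->; rewrite ffunE.
Qed.

Lemma balanced_cases st : balanced st ->
  all_types_live st \/ (forall io, supply st io = 0).
Proof.
case=> supply_ge0 total.
have [live_st|/forallPn[i1 /existsPn i1_dead]] := boolP (all_types_live st).
  by left.
right.
have no_time_left : n%:R * (1 - clock st) = 0.
  rewrite -(total i1); apply: big1 => o _.
  by apply/eqP; rewrite eq_le leNgt i1_dead supply_ge0.
by case=> i' o; move: (total i'); rewrite no_time_left => /psumr_eq0P->.
Qed.

Lemma topM_best st j x : topM st j = Some x ->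
  (forall i', 0 < supply st (i', x i')) /\
  (forall i' o, 0 < supply st (i', o) -> (ord j i' (x i') <= ord j i' o)%N).
Proof.
rewrite /top_obj; case: pickP => // y /andP[avy besty] [<-{x}].
rewrite availM_E in avy; split=> [i'|i' o io_live]; first exact: (forallP avy i').
rewrite leqNgt; apply/negP => o_better.
pose z : B := [ffun k => if k == i' then o else y k].
have avz : availM st z.
  rewrite availM_E; apply/forallP => k; rewrite ffunE.
  by case: eqP => [->|_] //; exact: (forallP avy k).
have zy : bM j z y.
  apply/existsP; exists i'; rewrite ffunE eqxx o_better /=; apply/forallP => k.
  apply/implyP => k_lt; rewrite ffunE; case: (k =P i') => [Ek|//].
  by rewrite Ek ltnn in k_lt.
by move: (forallP besty z); rewrite avz zy.
Qed.

Lemma best_in_stock (st : SM) j i' : [exists o, 0 < supply st (i', o)] ->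
  exists o0, 0 < supply st (i', o0) /\
    forall o, 0 < supply st (i', o) -> (ord j i' o0 <= ord j i' o)%N.
Proof.
case/existsP => o io_live.
have := @arg_minnP _ o (fun o => 0 < supply st (i', o)) (fun o => ord j i' o) io_live.
by case=> o0 o0_live o0_min; exists o0.
Qed.

(* If every type is live, each agent has a best available bundle: the bundle
   of her best items in stock is not beaten by any available bundle. *)
Lemma topM_exists st j : all_types_live st -> exists x, topM st j = Some x.
Proof.
move=> live_st; rewrite /top_obj; case: pickP => [y _|none]; first by exists y.
have [best best_spec] : exists best : B, forall i', 0 < supply st (i', best i') /\
    forall o, 0 < supply st (i', o) -> (ord j i' (best i') <= ord j i' o)%N.
  have /fin_all_exists[best best_spec] i' := best_in_stock j (forallP live_st i').
  by exists [ffun i' => best i'] => i'; rewrite ffunE.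
exfalso; move: (none best); rewrite availM_E.
have -> : [forall i', 0 < supply st (i', best i')] by apply/forallP => k; case: (best_spec k).
move/negbT/negP; apply; apply/forallP => y; apply/implyP; rewrite availM_E => avy.
apply/negP => /existsP[k /andP[k_lt _]].
case: (best_spec k) => _ /(_ (y k) (forallP avy k)) k_le.
by move: (leq_trans k_lt k_le); rewrite ltnn.
Qed.

Lemma topM_exhausted st j : (forall io, supply st io = 0) -> topM st j = None.
Proof.
move=> dead; rewrite /top_obj; case: pickP => // y /andP[avy _].
by move: (forallP avy (i, y i)); rewrite /bundle_contents /= eqxx dead ltxx.
Qed.

Lemma top_proj st j : balanced st ->
  topP (proj st) j = omap (fun x : B => x i) (topM st j).
Proof.
case/balanced_cases => [live_st|dead]; last first.
  rewrite topM_exhausted //= /top_obj; case: pickP => // y /andP[avy _].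
  by rewrite availP_E dead ltxx in avy.
have [x topx] := topM_exists j live_st; rewrite topx /=.
have [x_live x_best] := topM_best topx.
rewrite {1}/top_obj; case: pickP => [y /andP[avy besty]|none].
- congr Some; rewrite availP_E in avy.
  have := forallP besty (x i); rewrite availP_E x_live /= -leqNgt => yx.
  apply: (@perm_inj _ (ord j i)); apply/val_inj/eqP.
  by rewrite eqn_leq yx x_best.
- exfalso; move: (none (x i)); rewrite /= availP_E x_live /=.
  move/negbT/negP; apply; apply/forallP => y; apply/implyP.
  by rewrite availP_E -leqNgt; exact: x_best.
Qed.

Lemma rate_proj st o : balanced st -> rateP (proj st) o = rateM st (i, o).
Proof.
move=> bal; rewrite /rate; congr (_%:R); apply: eq_card => j.
by rewrite !inE /eats top_proj //; case: (topM st j) => [x|] //=; rewrite eq_sym.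
Qed.

Lemma sum_rateM st i' : (forall j, exists x, topM st j = Some x) ->
  \sum_(o : 'I_n) rateM st (i', o) = n%:R.
Proof.
move=> all_eat; rewrite /rate -natr_sum; congr (_%:R).
transitivity (\sum_(o : 'I_n) \sum_(j : 'I_n) (eatsM st j (i', o) : nat)).
  apply: eq_bigr => o _; rewrite -sum1_card big_mkcond /=.
  by apply: eq_bigr => j _; rewrite inE; case: eats.
rewrite exchange_big /= -[n in RHS]card_ord -sum1_card.
apply: eq_bigr => j _; case: (all_eat j) => x topx.
rewrite /eats topx /bundle_contents /= (bigD1 (x i')) //= eqxx big1 // => o xo.
by rewrite eq_sym (negbTE xo).
Qed.

Lemma n_gt0 : (0 : R) < n%:R.
Proof. by rewrite ltr0n (leq_ltn_trans _ (ltn_ord j0)). Qed.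

(* Each phase keeps the run balanced: every type loses n * duration. *)
Lemma balanced_step st : balanced st -> balanced (stepM st).
Proof.
move=> bal; have [supply_ge0 total] := bal.
have fst : feasible None st by split.
have [supply'_ge0 _] : feasible None (stepM st) := feasible_step _ _ fst.
split=> // i'.
case: (balanced_cases bal) => [live_st|dead].
- have all_eat j := topM_exists j live_st.
  rewrite step_advance clock_advance.
  under eq_bigr do rewrite supply_advance.
  by rewrite sumrB -mulr_sumr sum_rateM // total; ring.
- by rewrite step_fixed // /dur dmin_no_top // => j; rewrite topM_exhausted.
Qed.

Lemma balanced_run k : balanced (iter k stepM initM).
Proof.
elim: k => [|k IH] /=; last exact: balanced_step.
split=> [io|i']; first by rewrite ffunE ler01.
by under eq_bigr do rewrite ffunE; rewrite sumr_const card_ord subr0 mulr1.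
Qed.

Lemma clock_le1 st : balanced st -> clock st <= 1.
Proof.
move=> [supply_ge0 total].
have : 0 <= \sum_(o : 'I_n) supply st (i, o) by apply: sumr_ge0.
by rewrite total pmulr_rge0 ?n_gt0 // subr_ge0.
Qed.

Lemma feasible_proj st : balanced st -> feasible (Some 1) (proj st).
Proof.
move=> bal; split; last exact: clock_le1.
by move=> o; rewrite supply_proj; exact: bal.1.
Qed.

Lemma ratios_proj st : balanced st -> {subset ratiosP (proj st) <= ratiosM st}.
Proof.
move=> bal x /mem_ratios[o ro ->]; rewrite supply_proj rate_proj //.
by apply: ratio_mem; rewrite -rate_proj.
Qed.

Lemma durM_le_durP st : balanced st -> durM st <= durP (proj st).
Proof.
move=> bal; have durM_dmin : durM st = dminM st by [].
rewrite {2}/dur le_min; apply/andP; split.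
- case: (balanced_cases bal) => [live_st|dead].
    have [x topx] := topM_exists j0 live_st.
    have : eatsP (proj st) j0 (x i) by rewrite /eats top_proj // topx /=.
    case/eats_ratios/dmin_mem/mem_ratios => o ro ->.
    by apply/dmin_le/ratios_proj/ratio_mem.
  rewrite durM_dmin dmin_no_top; last by move=> j; exact: topM_exhausted.
  by apply: dmin_ge0; case: (feasible_proj bal).
- have := clock_le1 (balanced_step bal).
  by rewrite step_advance clock_advance => ?; lra.
Qed.

Lemma proj_step st : balanced st -> proj (stepM st) = advanceP (proj st) (durM st).
Proof.
move=> bal; rewrite step_advance; set d := durM st.
apply: state_ext => //.
- by apply/ffunP => o; rewrite supply_advance !supply_proj supply_advance rate_proj.
apply/ffunP => j; apply/ffunP => o; rewrite alloc_advance !alloc_proj.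
under eq_bigr do rewrite alloc_advance.
rewrite big_split /= top_proj //; congr (_ + _).
case: (topM st j) => [y|] /=; last by rewrite big1.
have [yo|yo] := eqVneq (y i) o.
- rewrite (bigD1 y) /=; last by rewrite yo.
  rewrite eqxx yo eqxx big1 ?addr0 // => x /andP[_ xy].
  by case: eqP => // -[E]; rewrite E eqxx in xy.
- rewrite big1; last by move=> x /eqP xo; case: eqP => // -[E]; rewrite E xo eqxx in yo.
  by case: eqP => // -[E]; rewrite E eqxx in yo.
Qed.

Lemma PS_from_run k :
  iter n.+1 stepP (proj (iter k stepM initM)) = iter n.+1 stepP initP.
Proof.
elim: k => [|k IH]; first by rewrite /= proj_init.
have bal := balanced_run k.
rewrite [iter k.+1 _ _]iterS proj_step // iter_step_advance //.
- exact: feasible_proj.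
- by apply: leq_ltn_trans (max_card _) _; rewrite card_ord.
- by apply: dur_ge0; split => //; case: bal.
- exact: durM_le_durP.
Qed.

(* At the end of the MPS run everything is eaten, so its projection is a
   terminal state of PS. *)
Lemma proj_terminal (S := iter #|{: 'I_p * 'I_n}|.+1 stepM initM) :
  stepP (proj S) = proj S.
Proof.
have bal : balanced S := balanced_run _.
have durS : durM S = 0.
  apply: dur_iter_eq0; first by split => // io; rewrite ffunE ler01.
  by rewrite ltnS max_card.
have notop j : topM S j = None.
  case topx: (topM S j) => [x|] //; have: eatsM S j (i, x i).
    by rewrite /eats topx /bundle_contents /= eqxx.
  by move/eats_dmin_gt0; rewrite -/(durM S) durS ltxx.
have dead : forall io, supply S io = 0.
  case: (balanced_cases bal) => // live_S.
  by case: (topM_exists j0 live_S) => x; rewrite notop.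
apply: step_fixed; rewrite /dur dmin_no_top; last by move=> j; rewrite top_proj // notop.
apply/eqP; rewrite eq_le ge_min lexx /= le_min lexx /= subr_ge0.
exact: (clock_le1 bal).
Qed.

End Projection.

Theorem claim1 (R : realFieldType) (n p : nat) (imp : 'I_n -> {perm 'I_p})
  (ord : 'I_n -> 'I_p -> {perm 'I_n}) (i : 'I_p) (j : 'I_n) (o : 'I_n) :
  marginal (MPS R imp ord) i j o = PS R (fun j' => ord j' i) j o.
Proof.
rewrite /marginal /MPS /PS /eating_outcome card_ord -alloc_proj.
rewrite -(PS_from_run R imp ord i j #|{: 'I_p * 'I_n}|.+1).
by rewrite [in RHS]iter_fixed // proj_terminal.
Qed.
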